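(* Let $\mu$ be a probability measure on $\mathbb{R}$ having an atom, i.e. $\mu(\{x\})>0$ for some $x\in\mathbb{R}$. Let $k\ge1$ and let $X_1,X_2,\dots$ be i.i.d. $k\times k$ random matrices whose entries are i.i.d. with law $\mu$, and $A_n=X_1X_2\cdots X_n$. Then $\lim_{n\to\infty}\Pr(A_n\text{ has all eigenvalues real})=1$. *)

From Stdlib Require Import Reals List.
Open Scope R_scope.

Definition sigma_algebra {T : Type} (F : (T -> Prop) -> Prop) : Prop :=
  F (fun _ => True) /\
  (forall A, F A -> F (fun x => ~ A x)) /\
  (forall A : nat -> T -> Prop, (forall n, F (A n)) -> F (fun x => exists n, A n x)).

(** [P] is a probability measure on the measurable space [(T, F)]
    (P is total on subsets, but only its values on [F] are constrained). *)
Definition probability_measure {T : Type} (F : (T -> Prop) -> Prop)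
    (P : (T -> Prop) -> R) : Prop :=
  sigma_algebra F /\
  P (fun _ => True) = 1 /\
  (forall A, F A -> 0 <= P A) /\
  (forall A : nat -> T -> Prop,
     (forall n, F (A n)) ->
     (forall n m x, n <> m -> A n x -> A m x -> False) ->
     infinite_sum (fun n => P (A n)) (P (fun x => exists n, A n x))).

Definition Borel (B : R -> Prop) : Prop :=
  forall G : (R -> Prop) -> Prop,
    sigma_algebra G -> (forall a, G (fun x => x <= a)) -> G B.

(** * Real k x k matrices, represented as functions nat -> nat -> R
      (only the entries with indices < k are relevant). *)

Definition sumR (k : nat) (f : nat -> R) : R :=
  fold_right Rplus 0 (map f (seq 0 k)).

Definition mat_mul (k : nat) (A B : nat -> nat -> R) : nat -> nat -> R :=
  fun i j => sumR k (fun l => A i l * B l j).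

Definition mat_id : nat -> nat -> R :=
  fun i j => if Nat.eqb i j then 1 else 0.

(** [mat_prod k M n] = M 1 * M 2 * ... * M n  (identity for n = 0). *)
Fixpoint mat_prod (k : nat) (M : nat -> nat -> nat -> R) (n : nat)
  : nat -> nat -> R :=
  match n with
  | O => mat_id
  | S m => mat_mul k (mat_prod k M m) (M (S m))
  end.

Definition minor0 (A : nat -> nat -> R) (j : nat) : nat -> nat -> R :=
  fun r c => A (S r) (if Nat.ltb c j then c else S c).

Fixpoint det (k : nat) (A : nat -> nat -> R) : R :=
  match k with
  | O => 1
  | S m => sumR (S m) (fun j => (-1) ^ j * A O j * det m (minor0 A j))
  end.

Definition charpoly_eval (k : nat) (A : nat -> nat -> R) (x : R) : R :=
  det k (fun i j => x * mat_id i j - A i j).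

Definition all_eigenvalues_real (k : nat) (A : nat -> nat -> R) : Prop :=
  exists lam : list R, length lam = k /\
    forall x : R, charpoly_eval k A x = fold_right Rmult 1 (map (fun l => x - l) lam).

From Stdlib Require Import Reals List Permutation Lra Lia ZArith Classical
  FunctionalExtensionality PropExtensionality.
From mathcomp Require all_boot all_order all_algebra Rstruct ordered_qelim qe_rcf zify.
Open Scope R_scope.

(* The constant matrix with all entries equal to the atom [a] has rank one, and
   a product with a rank-one factor has rank at most one; a rank-one matrix
   [u v^T] has characteristic polynomial [x^(k-1) (x - v^T u)], so all its
   eigenvalues are real. Each factor is this constant matrix with probability
   [q = mu({a})^(k^2) > 0], independently, hence
   [P(A_n has real spectrum) >= 1 - (1 - q)^n -> 1].
   The event itself is measurable because, by quantifier elimination over the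
   real closed field [R], "det(xI - A) splits over R" is equivalent to a
   quantifier-free combination of polynomial (in)equalities in the entries of [A]. *)

Definition measurable_fun {Omega : Type} (F : (Omega -> Prop) -> Prop)
    (f : Omega -> R) : Prop :=
  forall c, F (fun w => f w <= c).

Lemma rational_between (x y : R) : x < y ->
  exists N m m' : nat, x < (INR m - INR m') / INR N < y.
Proof.
intros Hxy.
destruct (archimed_cor1 (y - x)) as [N [HN1 HN2]]; [lra|].
assert (HN : 0 < INR N) by (apply lt_0_INR; lia).
assert (Hint : exists m m' : nat, IZR (up (x * INR N)) = INR m - INR m').
{ destruct (up (x * INR N)) as [|p|p].
  - exists O, O. simpl. lra.
  - exists (Pos.to_nat p), O. rewrite INR_IZR_INZ, positive_nat_Z. simpl. lra.
  - exists O, (Pos.to_nat p).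
    rewrite (INR_IZR_INZ (Pos.to_nat p)), positive_nat_Z, <- Pos2Z.opp_pos, opp_IZR.
    simpl. lra. }
destruct Hint as [m [m' Hm]]. exists N, m, m'. rewrite <- Hm.
destruct (archimed (x * INR N)) as [H1 H2].
assert (Hy : x * INR N + 1 < y * INR N).
{ apply (Rmult_lt_compat_r (INR N)) in HN1; [|exact HN].
  rewrite Rinv_l in HN1; nra. }
split; apply (Rmult_lt_reg_r (INR N)); auto; unfold Rdiv;
  rewrite Rmult_assoc, Rinv_l, Rmult_1_r; lra.
Qed.

Section SigmaAlgebra.
Context {Omega : Type} {F : (Omega -> Prop) -> Prop}.

Lemma measurable_ext (A B : Omega -> Prop) : (forall w, A w <-> B w) -> F A -> F B.
Proof.
intros H HA. replace B with A; [exact HA|].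
apply functional_extensionality; intro w; apply propositional_extensionality, H.
Qed.

Lemma measurable_fun_ext (f g : Omega -> R) :
  (forall w, f w = g w) -> measurable_fun F f -> measurable_fun F g.
Proof.
intros H Hf c. apply (measurable_ext (fun w => f w <= c)); [|apply Hf].
intro w; rewrite H; tauto.
Qed.

Context (HF : sigma_algebra F).

Lemma measurableT : F (fun _ => True).
Proof. apply HF. Qed.

Lemma measurableC {A : Omega -> Prop} : F A -> F (fun w => ~ A w).
Proof. apply HF. Qed.

Lemma measurable_bigcup (A : nat -> Omega -> Prop) :
  (forall n, F (A n)) -> F (fun w => exists n, A n w).
Proof. apply HF. Qed.

Lemma measurable0 : F (fun _ => False).
Proof.
apply (measurable_ext (fun _ => ~ True)); [tauto|]. apply measurableC, measurableT.
Qed.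

Lemma measurableU {A B : Omega -> Prop} : F A -> F B -> F (fun w => A w \/ B w).
Proof.
intros HA HB.
apply (measurable_ext (fun w => exists n, (match n with O => A | _ => B end) w)).
- intro w; split.
  + intros [[|n] Hn]; auto.
  + intros [H|H]; [exists O | exists 1%nat]; exact H.
- apply measurable_bigcup. intros [|n]; auto.
Qed.

Lemma measurableI {A B : Omega -> Prop} : F A -> F B -> F (fun w => A w /\ B w).
Proof.
intros HA HB. apply (measurable_ext (fun w => ~ (~ A w \/ ~ B w))).
- intro w; tauto.
- apply measurableC, measurableU; apply measurableC; auto.
Qed.

Lemma measurable_imply {A B : Omega -> Prop} : F A -> F B -> F (fun w => A w -> B w).
Proof.
intros HA HB. apply (measurable_ext (fun w => ~ A w \/ B w)).
- intro w; tauto.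
- apply measurableU; [apply measurableC|]; auto.
Qed.

Lemma measurable_cst (Q : Prop) : F (fun _ => Q).
Proof.
destruct (classic Q) as [H|H].
- apply (measurable_ext (fun _ => True)); [tauto|apply measurableT].
- apply (measurable_ext (fun _ => False)); [tauto|apply measurable0].
Qed.

Lemma measurable_forall_list (A : nat -> Omega -> Prop) (L : list nat) :
  (forall m, In m L -> F (A m)) -> F (fun w => forall m, In m L -> A m w).
Proof.
induction L as [|a L IH]; intros H.
- apply (measurable_ext (fun _ => True)); [simpl; tauto|apply measurableT].
- apply (measurable_ext (fun w => A a w /\ (forall m, In m L -> A m w))).
  + intro w; simpl; split.
    * intros [H1 H2] m [<-|Hm]; auto.
    * intros H1; split; auto.
  + apply measurableI; [apply H; simpl; auto|].
    apply IH. intros m Hm. apply H; simpl; auto.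
Qed.

Lemma measurable_fun_lt {f : Omega -> R} :
  measurable_fun F f -> forall c, F (fun w => f w < c).
Proof.
intros Hf c.
apply (measurable_ext (fun w => exists n, f w <= c - / INR (S n))).
- intro w; split.
  + intros [n Hn]. assert (0 < / INR (S n)) by (apply Rinv_0_lt_compat, lt_0_INR; lia).
    lra.
  + intros H. destruct (archimed_cor1 (c - f w)) as [[|N] [HN1 HN2]]; [lra|lia|].
    exists N. lra.
- apply measurable_bigcup. intro n. apply Hf.
Qed.

Lemma measurable_fun_ge {f : Omega -> R} :
  measurable_fun F f -> forall c, F (fun w => c <= f w).
Proof.
intros Hf c. apply (measurable_ext (fun w => ~ f w < c)).
- intro w; split; intro H; lra.
- apply measurableC, measurable_fun_lt, Hf.
Qed.

Lemma measurable_fun_gt {f : Omega -> R} :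
  measurable_fun F f -> forall c, F (fun w => c < f w).
Proof.
intros Hf c. apply (measurable_ext (fun w => ~ f w <= c)).
- intro w; split; intro H; lra.
- apply measurableC, Hf.
Qed.

Lemma measurable_fun_cst (a : R) : measurable_fun F (fun _ => a).
Proof. intro c. apply measurable_cst. Qed.

Lemma measurable_funN {f : Omega -> R} :
  measurable_fun F f -> measurable_fun F (fun w => - f w).
Proof.
intros Hf c. apply (measurable_ext (fun w => - c <= f w)).
- intro w; split; intro; lra.
- apply measurable_fun_ge, Hf.
Qed.

Lemma measurable_funZ (a : R) {f : Omega -> R} :
  measurable_fun F f -> measurable_fun F (fun w => a * f w).
Proof.
intros Hf.
assert (Hpos : forall b, 0 < b -> measurable_fun F (fun w => b * f w)).
{ intros b Hb c. apply (measurable_ext (fun w => f w <= c / b)); [|apply Hf].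
  intro w. split; intro H.
  - apply (Rmult_le_compat_l b) in H; [|lra].
    replace (b * (c / b)) with c in H by (field; lra). exact H.
  - apply (Rmult_le_reg_l b); [exact Hb|].
    replace (b * (c / b)) with c by (field; lra). exact H. }
destruct (Rtotal_order a 0) as [Ha|[->|Ha]].
- apply (measurable_fun_ext (fun w => - ((- a) * f w))); [intro; ring|].
  apply measurable_funN, Hpos. lra.
- apply (measurable_fun_ext (fun _ => 0)); [intro; ring|]. apply measurable_fun_cst.
- apply Hpos, Ha.
Qed.

(* [f + g > c] is the countable union over rationals [r] of [f > r] and [g > c - r]. *)
Lemma measurable_funD {f g : Omega -> R} :
  measurable_fun F f -> measurable_fun F g -> measurable_fun F (fun w => f w + g w).
Proof.
intros Hf Hg c.
apply (measurable_ext (fun w => ~ exists N m m' : nat,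
   (INR m - INR m') / INR N < f w /\ c - (INR m - INR m') / INR N < g w)).
- intro w. split.
  + intros H. apply Rnot_lt_le. intro Hc. apply H.
    destruct (rational_between (c - g w) (f w)) as [N [m [m' Hq]]]; [lra|].
    exists N, m, m'. lra.
  + intros H [N [m [m' Hq]]]. lra.
- apply measurableC, measurable_bigcup; intro N. apply measurable_bigcup; intro m.
  apply measurable_bigcup; intro m'.
  apply measurableI; apply measurable_fun_gt; auto.
Qed.

Lemma measurable_fun_sqr {f : Omega -> R} :
  measurable_fun F f -> measurable_fun F (fun w => f w * f w).
Proof.
intros Hf c.
destruct (Rlt_or_le c 0) as [Hc|Hc].
- apply (measurable_ext (fun _ => False)); [|apply measurable0].
  intro w. split; [tauto|]. intro H. nra.
- apply (measurable_ext (fun w => - sqrt c <= f w /\ f w <= sqrt c)).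
  + intro w. assert (Hs := sqrt_sqrt c Hc). assert (Hs0 := sqrt_pos c).
    split; [intros [H1 H2]; nra | intro H; split; nra].
  + apply measurableI; [apply measurable_fun_ge|]; apply Hf.
Qed.

Lemma measurable_funM {f g : Omega -> R} :
  measurable_fun F f -> measurable_fun F g -> measurable_fun F (fun w => f w * g w).
Proof.
intros Hf Hg.
apply (measurable_fun_ext (fun w => / 4 * ((f w + g w) * (f w + g w) +
   - ((f w + - g w) * (f w + - g w))))); [intro w; field|].
apply measurable_funZ, measurable_funD; [|apply measurable_funN];
  apply measurable_fun_sqr, measurable_funD; auto; apply measurable_funN, Hg.
Qed.

Lemma measurable_le {f g : Omega -> R} :
  measurable_fun F f -> measurable_fun F g -> F (fun w => f w <= g w).
Proof.
intros Hf Hg. apply (measurable_ext (fun w => f w + - g w <= 0)).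
- intro w; split; intro; lra.
- apply measurable_funD, measurable_funN; auto.
Qed.

Lemma measurable_lt {f g : Omega -> R} :
  measurable_fun F f -> measurable_fun F g -> F (fun w => f w < g w).
Proof.
intros Hf Hg. apply (measurable_ext (fun w => ~ g w <= f w)).
- intro w; split; intro; lra.
- apply measurableC, measurable_le; auto.
Qed.

Lemma measurable_eq {f g : Omega -> R} :
  measurable_fun F f -> measurable_fun F g -> F (fun w => f w = g w).
Proof.
intros Hf Hg. apply (measurable_ext (fun w => f w <= g w /\ g w <= f w)).
- intro w; split; intro; lra.
- apply measurableI; apply measurable_le; auto.
Qed.

Lemma measurable_fun_sumR (n : nat) (f : Omega -> nat -> R) :
  (forall l, (l < n)%nat -> measurable_fun F (fun w => f w l)) ->
  measurable_fun F (fun w => sumR n (f w)).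
Proof.
intros H. unfold sumR.
assert (Hs : forall s, (forall l, In l s -> (l < n)%nat) ->
   measurable_fun F (fun w => fold_right Rplus 0 (map (f w) s))).
{ induction s as [|l s IH]; intros Hs; simpl.
  - apply measurable_fun_cst.
  - apply measurable_funD; [apply H, Hs; simpl; auto|].
    apply IH. intros l' Hl'. apply Hs; simpl; auto. }
apply Hs. intros l Hl. apply in_seq in Hl. lia.
Qed.

End SigmaAlgebra.

Lemma Borel_singleton (a : R) : Borel (fun y => y = a).
Proof.
intros G HG Hhalf.
apply (measurable_eq HG (f := fun y => y) (g := fun _ => a)); [exact Hhalf|].
apply (measurable_fun_cst HG).
Qed.

Section Probability.
Context {Omega : Type} {F : (Omega -> Prop) -> Prop} {P : (Omega -> Prop) -> R}.

Lemma prob_ext (A B : Omega -> Prop) : (forall w, A w <-> B w) -> P A = P B.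
Proof.
intros H. f_equal.
apply functional_extensionality; intro w; apply propositional_extensionality, H.
Qed.

Context (HP : probability_measure F P).
Let HF : sigma_algebra F := proj1 HP.

Lemma prob_setT : P (fun _ => True) = 1.
Proof. apply HP. Qed.

Lemma prob_ge0 {A : Omega -> Prop} : F A -> 0 <= P A.
Proof. apply HP. Qed.

(* Countable additivity for the constant sequence of empty sets forces [P set0 = 0]. *)
Lemma prob_set0 : P (fun _ => False) = 0.
Proof.
assert (H : infinite_sum (fun _ => P (fun _ => False)) (P (fun _ => exists n : nat, False))).
{ apply HP; [intros; apply measurable0, HF | intros n m x _ []]. }
rewrite (prob_ext (fun _ => exists n : nat, False) (fun _ => False)) in H
  by (intro; split; [intros [_ []] | tauto]).
set (c := P (fun _ => False)) in *.
destruct (Rle_lt_or_eq_dec 0 c) as [Hlt|Heq]; [apply prob_ge0, measurable0, HF| |auto].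
exfalso. destruct (H c Hlt) as [N HN].
specialize (HN (S N) ltac:(lia)). rewrite sum_cte in HN.
unfold R_dist in HN. rewrite !S_INR in HN.
assert (0 <= INR N) by apply pos_INR.
rewrite Rabs_right in HN by nra. nra.
Qed.

Lemma prob_setU (A B : Omega -> Prop) : F A -> F B -> (forall w, A w -> B w -> False) ->
  P (fun w => A w \/ B w) = P A + P B.
Proof.
intros HA HB Hdisj.
set (S := fun n => match n with O => A | 1%nat => B | _ => fun _ => False end).
assert (Hsum : infinite_sum (fun n => P (S n)) (P (fun w => exists n, S n w))).
{ apply HP.
  - intros [|[|n]]; simpl; auto. apply measurable0, HF.
  - intros [|[|n]] [|[|m]] x Hnm; simpl; try tauto; try lia; eauto. }
rewrite (prob_ext (fun w => exists n, S n w) (fun w => A w \/ B w)) in Hsum.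
- apply (uniqueness_sum (fun n => P (S n))); [exact Hsum|].
  intros eps Heps. exists 1%nat. intros n Hn.
  replace (sum_f_R0 (fun n => P (S n)) n) with (P A + P B).
  + unfold R_dist. rewrite Rminus_diag, Rabs_R0. exact Heps.
  + induction n as [|[|n] IH]; [lia|reflexivity|].
    rewrite tech5, <- IH by lia. simpl. rewrite prob_set0. ring.
- intro w; split.
  + intros [[|[|n]] Hn]; simpl in Hn; tauto.
  + intros [H|H]; [exists O | exists 1%nat]; exact H.
Qed.

Lemma prob_setC {A : Omega -> Prop} : F A -> P (fun w => ~ A w) = 1 - P A.
Proof.
intros HA. rewrite <- prob_setT.
rewrite (prob_ext (fun _ => True) (fun w => A w \/ ~ A w)) by (intro w; tauto).
rewrite prob_setU; auto; [ring|apply measurableC; auto].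
Qed.

Lemma prob_setD (A B : Omega -> Prop) : F A -> F B ->
  P (fun w => A w /\ ~ B w) = P A - P (fun w => A w /\ B w).
Proof.
intros HA HB.
rewrite (prob_ext A (fun w => (A w /\ B w) \/ (A w /\ ~ B w)))
  by (intro w; destruct (classic (B w)); tauto).
rewrite prob_setU; [ring| | |tauto]; apply measurableI; auto. apply measurableC; auto.
Qed.

Lemma le_prob {A B : Omega -> Prop} : F A -> F B -> (forall w, A w -> B w) -> P A <= P B.
Proof.
intros HA HB Hsub.
assert (H := prob_setD B A HB HA).
rewrite (prob_ext (fun w => B w /\ A w) A) in H by (intro w; split; [tauto|auto]).
assert (0 <= P (fun w => B w /\ ~ A w)) by (apply prob_ge0, measurableI, measurableC; auto).
lra.
Qed.

Lemma prob_le1 {A : Omega -> Prop} : F A -> P A <= 1.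
Proof. intros HA. rewrite <- prob_setT. apply le_prob; auto. apply measurableT, HF. Qed.

End Probability.

Lemma NoDup_list_prod {A B : Type} (l : list A) (l' : list B) :
  NoDup l -> NoDup l' -> NoDup (list_prod l l').
Proof.
intros Hl Hl'. induction Hl as [|a l Ha Hl IH]; simpl; [constructor|].
apply NoDup_app; [|exact IH|].
- apply FinFun.Injective_map_NoDup; [intros x y H; injection H; auto|exact Hl'].
- intros [x y] H1 H2. apply in_map_iff in H1 as [z [Hz _]]. injection Hz as -> ->.
  apply in_prod_iff in H2. tauto.
Qed.

Lemma fold_right_Rmult_const {A : Type} (p : R) (g : A -> R) (l : list A) :
  (forall t, In t l -> g t = p) -> fold_right Rmult 1 (map g l) = p ^ length l.
Proof.
induction l as [|t l IH]; intros H; simpl; [reflexivity|].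
rewrite H, IH; auto. intros t' Ht'. apply H; simpl; auto. simpl; auto.
Qed.

Lemma Un_cv_1_geometric (u : nat -> R) (r : R) :
  0 <= r < 1 -> (forall n, 1 - r ^ n <= u n <= 1) -> Un_cv u 1.
Proof.
intros Hr Hu eps Heps.
destruct (pow_lt_1_zero r ltac:(rewrite Rabs_right; lra) eps Heps) as [N HN].
exists N. intros n Hn. specialize (HN n Hn). specialize (Hu n).
assert (0 <= r ^ n) by (apply pow_le; lra).
rewrite Rabs_right in HN by lra.
unfold R_dist. rewrite Rabs_left1 by lra. lra.
Qed.

Lemma sumR_ext (n : nat) (f g : nat -> R) :
  (forall i, (i < n)%nat -> f i = g i) -> sumR n f = sumR n g.
Proof.
intros H. unfold sumR. f_equal. apply map_ext_in. intros i Hi.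
apply in_seq in Hi. apply H. lia.
Qed.

Lemma sumR_scal (n : nat) (c : R) (f : nat -> R) :
  sumR n (fun l => c * f l) = c * sumR n f.
Proof. unfold sumR. induction (seq 0 n) as [|a s IH]; simpl; [ring|]. rewrite IH. ring. Qed.

Lemma det_ext (n : nat) (A B : nat -> nat -> R) :
  (forall i j, (i < n)%nat -> (j < n)%nat -> A i j = B i j) -> det n A = det n B.
Proof.
revert A B. induction n as [|n IH]; intros A B H; simpl; [reflexivity|].
apply sumR_ext. intros j Hj. rewrite H by lia. f_equal.
apply IH. intros r c Hr Hc. unfold minor0. apply H; [lia|].
destruct (Nat.ltb c j); lia.
Qed.

Definition rank_le1 (k : nat) (A : nat -> nat -> R) : Prop :=
  exists u v : nat -> R, forall i j, (i < k)%nat -> (j < k)%nat -> A i j = u i * v j.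

Lemma mat_mul_rank_le1_l (k : nat) (A B : nat -> nat -> R) :
  rank_le1 k A -> rank_le1 k (mat_mul k A B).
Proof.
intros [u [v Huv]].
exists u, (fun j => sumR k (fun l => v l * B l j)). intros i j Hi Hj.
unfold mat_mul. rewrite <- sumR_scal. apply sumR_ext. intros l Hl.
rewrite Huv by auto. ring.
Qed.

Lemma mat_mul_rank_le1_r (k : nat) (A B : nat -> nat -> R) :
  rank_le1 k B -> rank_le1 k (mat_mul k A B).
Proof.
intros [u [v Huv]].
exists (fun i => sumR k (fun l => A i l * u l)), v. intros i j Hi Hj.
unfold mat_mul. rewrite Rmult_comm, <- sumR_scal. apply sumR_ext. intros l Hl.
rewrite Huv by auto. ring.
Qed.

Lemma mat_prod_rank_le1 (k : nat) (M : nat -> nat -> nat -> R) (m n : nat) :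
  (1 <= m <= n)%nat -> rank_le1 k (M m) -> rank_le1 k (mat_prod k M n).
Proof.
intros Hmn HM. induction n as [|n IH]; [lia|].
destruct (Nat.eq_dec m (S n)) as [->|Hne]; simpl.
- apply mat_mul_rank_le1_r, HM.
- apply mat_mul_rank_le1_l, IH. lia.
Qed.

Module RealSpectrum.
Import all_boot all_order all_algebra Rstruct ordered_qelim qe_rcf zify.
Import Order.TTheory GRing.Theory Num.Theory.
Local Open Scope ring_scope.

Lemma sumR_big (n : nat) (f : nat -> R) : sumR n f = \sum_(i < n) f i.
Proof.
rewrite /sumR -(big_mkord xpredT) /index_iota subn0.
have -> : List.seq 0 n = iota 0 n by elim: n 0%N => //= n IH m; rewrite IH.
by elim: (iota 0 n) => [|a l IH] /=; rewrite ?big_nil ?big_cons ?IH.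
Qed.

Lemma ltbE (m n : nat) : Nat.ltb m n = (m < n)%N.
Proof.
case: (ltnP m n) => h.
  by apply/Nat.ltb_lt; move/ssrnat.ltP: h; lia.
by apply/Nat.ltb_ge; move/ssrnat.leP: h; lia.
Qed.

Lemma det_mx (n : nat) (A : nat -> nat -> R) :
  det n A = \det (\matrix_(i < n, j < n) A i j).
Proof.
elim: n A => [|n IH] A; first by rewrite det_mx00.
rewrite (expand_det_row _ ord0) /= sumR_big; apply: eq_bigr => j _.
rewrite IH /cofactor mxE RpowE add0n !RmultE mulrCA -mulrA.
congr (_ * (_ * \det _)); apply/matrixP => r c; rewrite !mxE /minor0 /= /bump ltbE.
by case: (ltnP c j).
Qed.

Lemma charpoly_evalE (k : nat) (A : nat -> nat -> R) (x : R) :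
  charpoly_eval k A x = (char_poly (\matrix_(i < k, j < k) A i j)).[x].
Proof.
rewrite /charpoly_eval det_mx.
have -> : forall p : {poly R}, p.[x] = horner_eval x p by [].
rewrite /char_poly -det_map_mx; congr (\det _); apply/matrixP=> i j; rewrite !mxE.
rewrite -[RHS]/(('X *+ (i == j) - (A i j)%:P).[x]) !hornerE hornerMn hornerX /mat_id.
have -> : Nat.eqb i j = (i == j).
  case: (eqVneq i j) => [->|h]; first exact/Nat.eqb_eq.
  by apply/Nat.eqb_neq => /val_inj /eqP; rewrite (negbTE h).
by rewrite RminusE RmultE; case: (i == j); rewrite ?mulr1n ?mulr0n ?mulr1 ?mulr0.
Qed.

(* Compare the two Schur-complement expansions of [det [[1, v], [u, 'X]]]. *)
Lemma char_poly_rank1 (n : nat) (u : 'cV[R]_n) (v : 'rV[R]_n) :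
  'X * char_poly (u *m v) = 'X^n * ('X - ((v *m u) 0 0)%:P).
Proof.
set U := map_mx polyC u; set V := map_mx polyC v.
pose B := block_mx (1 : 'M[{poly R}]_1) V U ('X%:M : 'M_n).
have detB : \det B = char_poly (u *m v).
  have : block_mx 1 0 (-U) 1 *m B = block_mx 1 V 0 ('X%:M - U *m V).
    by rewrite mulmx_block !mul1mx !mul0mx !addr0 mulNmx mulmx1 addNr mulNmx addrC.
  move/(congr1 determinant); rewrite det_mulmx det_lblock det_ublock !det1 !mul1r.
  by move=> ->; rewrite /char_poly /char_poly_mx map_mxM.
have XdetB : 'X * \det B = ('X - ((v *m u) 0 0)%:P) * 'X^n.
  have : block_mx ('X%:M : 'M_1) (-V) 0 1 *m B = block_mx ('X%:M - V *m U) 0 U 'X%:M.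
    rewrite mulmx_block !mul1mx !mul0mx !add0r mulmx1 mul_scalar_mx mulNmx.
    by rewrite mul_mx_scalar scalerN subrr.
  move/(congr1 determinant); rewrite det_mulmx det_lblock det_ublock det1 mulr1.
  rewrite det_scalar1 => ->.
  by rewrite det_mx11 det_scalar [_ 0 0]mxE /V /U -map_mxM !mxE mulr1n.
by rewrite -detB XdetB mulrC.
Qed.

Lemma rank_le1_all_eigenvalues_real (k : nat) (A : nat -> nat -> R) :
  rank_le1 k A -> all_eigenvalues_real k A.
Proof.
case=> u [v HA]; case: k HA => [|m] HA.
  by exists nil; split => // x; rewrite /charpoly_eval.
set cu := \col_(i < m.+1) u i; set rv := \row_(j < m.+1) v j.
set c := (rv *m cu) 0 0.
have HM : \matrix_(i < m.+1, j < m.+1) A i j = cu *m rv.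
  by apply/matrixP => i j; rewrite !mxE big_ord1 !mxE HA //; apply/ssrnat.ltP.
have Hcp : char_poly (cu *m rv) = 'X^m * ('X - c%:P).
  apply: (@mulfI _ 'X); first by rewrite polyX_eq0.
  by rewrite char_poly_rank1 mulrA -exprS.
exists (c :: List.repeat 0%R m); split; first by rewrite /= List.repeat_length.
move=> x; rewrite charpoly_evalE HM Hcp hornerM hornerXn hornerXsubC /= mulrC.
congr (_ * _); elim: m {cu rv c HA HM Hcp} => [|m IH] //=.
by rewrite -IH exprS RminusE subr0.
Qed.

Section Measurability.
Context {Omega : Type} {F : (Omega -> Prop) -> Prop} (HF : sigma_algebra F).
Variable E : Omega -> seq R.
Hypothesis HE : forall i, measurable_fun F (fun w => nth 0 (E w) i).

Lemma measurable_eval {t : GRing.term R} :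
  GRing.rterm t -> measurable_fun F (fun w => GRing.eval (E w) t).
Proof.
elim: t => [i|x|n|t1 IH1 t2 IH2|t1 IH1|t1 IH1 n|t1 IH1 t2 IH2|t1 IH1|t1 IH1 n] /=.
- by move=> _; apply: HE.
- by move=> _; apply: measurable_fun_cst.
- by move=> _; apply: measurable_fun_cst.
- move=> /andP[h1 h2]; exact (measurable_funD HF (IH1 h1) (IH2 h2)).
- move=> h1; exact (measurable_funN HF (IH1 h1)).
- move=> h1; apply: (measurable_fun_ext (fun w => n%:R * GRing.eval (E w) t1)).
    by move=> w; rewrite mulr_natl.
  exact (measurable_funZ HF _ (IH1 h1)).
- move=> /andP[h1 h2]; exact (measurable_funM HF (IH1 h1) (IH2 h2)).
- by [].
- move=> h1; elim: n => [|n IHn]; first exact: measurable_fun_cst.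
  apply: (measurable_fun_ext (fun w => GRing.eval (E w) t1 * GRing.eval (E w) t1 ^+ n)).
    by move=> w; rewrite exprS.
  exact (measurable_funM HF (IH1 h1) IHn).
Qed.

Lemma measurable_qf_eval (g : ord.formula R) :
  ord.qf_form g && ord.rformula g -> F (fun w => ord.qf_eval (E w) g).
Proof.
elim: g => //=.
- by move=> b _; apply: measurable_cst.
- move=> t1 t2 /andP[h1 h2].
  apply: (measurable_ext (fun w => GRing.eval (E w) t1 = GRing.eval (E w) t2)).
    by move=> w; split => /eqP.
  exact (measurable_eq HF (measurable_eval h1) (measurable_eval h2)).
- move=> t1 t2 /andP[h1 h2].
  apply: (measurable_ext (fun w => Rlt (GRing.eval (E w) t1) (GRing.eval (E w) t2))).
    by move=> w; split => /RltP.
  exact (measurable_lt HF (measurable_eval h1) (measurable_eval h2)).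
- move=> t1 t2 /andP[h1 h2].
  apply: (measurable_ext (fun w => Rle (GRing.eval (E w) t1) (GRing.eval (E w) t2))).
    by move=> w; split => /RleP.
  exact (measurable_le HF (measurable_eval h1) (measurable_eval h2)).
- move=> f1 IH1 f2 IH2; rewrite andbACA => /andP[/IH1 h1 /IH2 h2].
  apply: (measurable_ext (fun w => ord.qf_eval (E w) f1 /\ ord.qf_eval (E w) f2)).
    by move=> w; split => /andP.
  exact (measurableI HF h1 h2).
- move=> f1 IH1 f2 IH2; rewrite andbACA => /andP[/IH1 h1 /IH2 h2].
  apply: (measurable_ext (fun w => ord.qf_eval (E w) f1 \/ ord.qf_eval (E w) f2)).
    by move=> w; split => /orP.
  exact (measurableU HF h1 h2).
- move=> f1 IH1 f2 IH2; rewrite andbACA => /andP[/IH1 h1 /IH2 h2].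
  apply: (measurable_ext (fun w => ord.qf_eval (E w) f1 -> ord.qf_eval (E w) f2)).
    by move=> w; split => /implyP.
  exact (measurable_imply HF h1 h2).
- move=> f1 IH1 h.
  apply: (measurable_ext (fun w => ~ ord.qf_eval (E w) f1)).
    by move=> w; split => /negP.
  exact (measurableC HF (IH1 h)).
Qed.
End Measurability.

Definition sum_term (n : nat) (f : nat -> GRing.term R) : GRing.term R :=
  List.fold_right (@GRing.Add R) (GRing.Const 0) (List.map f (List.seq 0 n)).

Definition minor0_term (A : nat -> nat -> GRing.term R) (j : nat) :
  nat -> nat -> GRing.term R :=
  fun r c => A r.+1 (if Nat.ltb c j then c else c.+1).

Fixpoint det_term (n : nat) (A : nat -> nat -> GRing.term R) : GRing.term R :=
  match n with
  | O => GRing.Const 1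
  | S m => sum_term m.+1 (fun j =>
      GRing.Mul (GRing.Mul (GRing.Const (Rpow_def.pow (-1) j)) (A O j))
                (det_term m (minor0_term A j)))
  end.

Lemma eval_sum_term (e : seq R) (n : nat) (f : nat -> GRing.term R) :
  GRing.eval e (sum_term n f) = sumR n (fun i => GRing.eval e (f i)).
Proof. by rewrite /sum_term /sumR; elim: (List.seq 0 n) => //= a l ->. Qed.

Lemma eval_det_term (e : seq R) (n : nat) (A : nat -> nat -> GRing.term R) :
  GRing.eval e (det_term n A) = det n (fun i j => GRing.eval e (A i j)).
Proof.
elim: n A => [|n IH] A //.
by rewrite [det_term _ _]/= eval_sum_term; apply: sumR_ext => j _ /=; rewrite IH.
Qed.

Definition charmx_term (k i j : nat) : GRing.term R :=
  GRing.Add (GRing.Mul (GRing.Var R (k * k + k)%N) (GRing.Const (mat_id i j)))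
            (GRing.Opp (GRing.Var R (i * k + j)%N)).

Definition root_product_term (k : nat) : GRing.term R :=
  List.fold_right (@GRing.Mul R) (GRing.Const 1)
    (List.map (fun l => GRing.Add (GRing.Var R (k * k + k)%N)
                                  (GRing.Opp (GRing.Var R (k * k + l)%N)))
       (List.seq 0 k)).

Lemma eval_root_product_term (k : nat) (e : seq R) :
  GRing.eval e (root_product_term k) = List.fold_right Rmult 1
    (List.map (fun l => nth 0 e (k * k + k) - nth 0 e (k * k + l)) (List.seq 0 k)).
Proof. by rewrite /root_product_term; elim: (List.seq 0 k) => //= a l ->. Qed.

Fixpoint exists_vars (n m : nat) (g : ord.formula R) : ord.formula R :=
  match m with O => g | S m' => ord.Exists n (exists_vars n.+1 m' g) end.

(* Variable [i * k + j] holds the entry [A i j], variables [k * k + l] (l < k)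
   the eigenvalues, and variable [k * k + k] the point [x]. *)
Definition real_spectrum_formula (k : nat) : ord.formula R :=
  exists_vars (k * k) k
    (ord.Forall (k * k + k)%N (ord.Equal (det_term k (charmx_term k)) (root_product_term k))).

Definition mx_env (k : nat) (A : nat -> nat -> R) : seq R :=
  [seq A (i %/ k)%N (i %% k)%N | i <- iota 0 (k * k)].

Lemma holds_exists_vars (m : nat) {n : nat} {e : seq R} {g : ord.formula R} :
  size e = n ->
  ord.holds e (exists_vars n m g) <-> exists l, size l = m /\ ord.holds (e ++ l) g.
Proof.
have set_nth_size (s : seq R) x : set_nth 0 s (size s) x = rcons s x.
  by elim: s => //= a s ->.
elim: m n e => [|m IH] n e He /=.
  split; first by move=> h; exists [::]; rewrite cats0.
  by case=> l [/size0nil -> ]; rewrite cats0.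
split.
  case=> x; rewrite -He set_nth_size (IH (size e).+1); last by rewrite size_rcons.
  by case=> l [Hl Hg]; exists (x :: l); split; [rewrite /= Hl | rewrite -cat_rcons].
case=> -[|x l] [] //= [Hl] Hg; exists x.
rewrite -He set_nth_size (IH (size e).+1); last by rewrite size_rcons.
by exists l; split => //; rewrite cat_rcons.
Qed.

Lemma size_mx_env (k : nat) (A : nat -> nat -> R) : size (mx_env k A) = (k * k)%N.
Proof. by rewrite /mx_env size_map size_iota. Qed.

Lemma nth_mx_env (k : nat) (A : nat -> nat -> R) (i j : nat) :
  (i < k)%N -> (j < k)%N -> nth 0 (mx_env k A) (i * k + j) = A i j.
Proof.
move=> hi hj; have hk : (0 < k)%N by apply: leq_ltn_trans hi.
have hlt : (i * k + j < k * k)%N by nia.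
rewrite /mx_env (nth_map 0%N) ?size_iota // nth_iota //.
by rewrite add0n divnMDl // divn_small // addn0 modnMDl modn_small.
Qed.

Lemma all_eigenvalues_real_holds (k : nat) (A : nat -> nat -> R) :
  all_eigenvalues_real k A <-> ord.holds (mx_env k A) (real_spectrum_formula k).
Proof.
rewrite /real_spectrum_formula (holds_exists_vars k (size_mx_env k A)).
have size_length (l : seq R) : size l = length l by elim: l => //= a l ->.
suff eqn (lam : seq R) : size lam = k ->
    (forall x, charpoly_eval k A x =
       List.fold_right Rmult 1 (List.map (fun l => x - l) lam)) <->
    ord.holds (mx_env k A ++ lam)
      (ord.Forall (k * k + k)%N (ord.Equal (det_term k (charmx_term k)) (root_product_term k))).
  split; case=> lam [hl h]; exists lam; rewrite ?size_length;
    by split => //; apply/eqn => //; rewrite size_length.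
move=> hl /=.
have hs : size (mx_env k A ++ lam) = (k * k + k)%N by rewrite size_cat size_mx_env hl.
have set_x x : set_nth 0 (mx_env k A ++ lam) (k * k + k) x = rcons (mx_env k A ++ lam) x.
  by rewrite -hs; elim: (mx_env k A ++ lam) => //= a s ->.
have evalL x : GRing.eval (set_nth 0 (mx_env k A ++ lam) (k * k + k) x)
    (det_term k (charmx_term k)) = charpoly_eval k A x.
  rewrite set_x eval_det_term /charpoly_eval; apply: det_ext => i j /ssrnat.ltP hi /ssrnat.ltP hj /=.
  have hlt : (i * k + j < k * k)%N by nia.
  have hlt' : (i * k + j < size (mx_env k A ++ lam))%N by rewrite hs; nia.
  by rewrite nth_rcons hs ltnn eqxx nth_rcons hlt' nth_cat size_mx_env hlt nth_mx_env.
have evalR x : GRing.eval (set_nth 0 (mx_env k A ++ lam) (k * k + k) x)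
    (root_product_term k) = List.fold_right Rmult 1 (List.map (fun l => x - l) lam).
  have -> : List.map (fun l => x - l) lam =
      List.map (fun l => x - nth 0 lam l) (List.seq 0 (size lam)).
    by elim: (lam) => //= a s ->; rewrite -seq_shift List.map_map.
  rewrite set_x eval_root_product_term hl; congr (List.fold_right _ _ _).
  apply: List.map_ext_in => l /List.in_seq [_ /ssrnat.ltP hlk] /=.
  rewrite !nth_rcons hs ltnn eqxx ltn_add2l hlk nth_cat size_mx_env.
  by rewrite ltnNge leq_addr /= addKn.
by split => h x; have := h x; rewrite evalL evalR.
Qed.

Lemma measurable_all_eigenvalues_real {Omega : Type} {F : (Omega -> Prop) -> Prop}
    (HF : sigma_algebra F) (k : nat) (A : Omega -> nat -> nat -> R) :
  (forall i j, (i < k)%coq_nat -> (j < k)%coq_nat -> measurable_fun F (fun w => A w i j)) ->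
  F (fun w => all_eigenvalues_real k (A w)).
Proof.
move=> HA.
set g := ord.quantifier_elim (fun n s => wproj n s) (ord.to_rform (real_spectrum_formula k)).
have g_qf : ord.qf_form g && ord.rformula g.
  exact: (ord.quantifier_elim_wf (fun i bc => @wf_QE_wproj R i bc)
           (ord.to_rform_rformula (real_spectrum_formula k))).
apply: (measurable_ext (fun w => ord.qf_eval (mx_env k (A w)) g)).
  move=> w; rewrite all_eigenvalues_real_holds.
  by split; [move=> h; apply/rcf_satP; exact: h | move/rcf_satP].
suff HE i : measurable_fun F (fun w => nth 0 (mx_env k (A w)) i).
  exact (measurable_qf_eval HF _ HE g g_qf).
have [hi|hi] := ltnP i (k * k).
  have hk : (0 < k)%N by rewrite lt0n; apply: contraTneq hi => ->.
  apply: (measurable_fun_ext (fun w => A w (i %/ k)%N (i %% k)%N)).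
    by move=> w; rewrite /mx_env (nth_map 0%N) ?size_iota // nth_iota.
  by apply: HA; apply/ssrnat.ltP; rewrite ?ltn_divLR ?ltn_mod.
apply: (measurable_fun_ext (fun _ => 0)); last exact: measurable_fun_cst.
by move=> w; rewrite nth_default // size_mx_env.
Qed.
End RealSpectrum.

Section ConstantFactors.
Context {mu : (R -> Prop) -> R} {k : nat}.
Context {Omega : Type} {F : (Omega -> Prop) -> Prop} {P : (Omega -> Prop) -> R}.
Context (HP : probability_measure F P) {X : nat -> nat -> nat -> Omega -> R}.
Context (Hmeas : forall n i j, (i < k)%nat -> (j < k)%nat ->
     forall B, Borel B -> F (fun w => B (X n i j w)))
  (Hlaw : forall n i j, (i < k)%nat -> (j < k)%nat ->
     forall B, Borel B -> P (fun w => B (X n i j w)) = mu B)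
  (Hindep : forall (l : list (nat * nat * nat)) (B : nat * nat * nat -> R -> Prop),
     NoDup l ->
     (forall t, In t l -> (snd (fst t) < k)%nat /\ (snd t < k)%nat /\ Borel (B t)) ->
     P (fun w => forall t, In t l -> B t (X (fst (fst t)) (snd (fst t)) (snd t) w))
     = fold_right Rmult 1
         (map (fun t => P (fun w => B t (X (fst (fst t)) (snd (fst t)) (snd t) w))) l)).
Variable a : R.

Let HF : sigma_algebra F := proj1 HP.
Let q : R := mu (fun y => y = a) ^ (k * k).

Definition constant_factor (m : nat) (w : Omega) : Prop :=
  forall i j, (i < k)%nat -> (j < k)%nat -> X m i j w = a.

Lemma measurable_constant_factor (m : nat) : F (constant_factor m).
Proof.
apply (measurable_ext (fun w => forall i, In i (seq 0 k) ->
                                forall j, In j (seq 0 k) -> X m i j w = a)).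
- intro w; unfold constant_factor; split.
  + intros H i j Hi Hj. apply H; apply in_seq; lia.
  + intros H i Hi j Hj. apply in_seq in Hi, Hj. apply H; lia.
- apply (measurable_forall_list HF). intros i Hi.
  apply (measurable_forall_list HF (fun j w => X m i j w = a)). intros j Hj.
  apply in_seq in Hi, Hj.
  apply (Hmeas m i j ltac:(lia) ltac:(lia) (fun y => y = a)), Borel_singleton.
Qed.

Lemma prob_constant_factors (ms : list nat) : NoDup ms ->
  P (fun w => forall m, In m ms -> constant_factor m w) = q ^ length ms.
Proof.
intros Hms.
set (l := list_prod (list_prod ms (seq 0 k)) (seq 0 k)).
assert (Hl : forall t, In t l ->
  In (fst (fst t)) ms /\ (snd (fst t) < k)%nat /\ (snd t < k)%nat).
{ intros [[m i] j] Ht. apply in_prod_iff in Ht as [Ht Hj].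
  apply in_prod_iff in Ht as [Hm Hi]. apply in_seq in Hi, Hj. simpl. repeat split; auto; lia. }
rewrite (prob_ext _ (fun w => forall t, In t l ->
  (fun (_ : nat * nat * nat) y => y = a) t (X (fst (fst t)) (snd (fst t)) (snd t) w))).
- etransitivity; [apply (Hindep l (fun _ y => y = a))|].
  + apply NoDup_list_prod; [apply NoDup_list_prod|]; auto; apply seq_NoDup.
  + intros t Ht. destruct (Hl t Ht) as [_ [Hi Hj]]. repeat split; auto.
    apply Borel_singleton.
  + rewrite (fold_right_Rmult_const (mu (fun y => y = a))).
    * unfold l, q. rewrite !length_prod, length_seq, <- pow_mult. f_equal. lia.
    * intros t Ht. destruct (Hl t Ht) as [_ [Hi Hj]].
      apply (Hlaw _ _ _ Hi Hj (fun y => y = a)), Borel_singleton.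
- intro w. split.
  + intros H t Ht. destruct (Hl t Ht) as [Hm [Hi Hj]]. apply H; auto.
  + intros H m Hm i j Hi Hj. apply (H (m, i, j)).
    apply in_prod_iff; split; [apply in_prod_iff; split|]; auto; apply in_seq; lia.
Qed.

Lemma atom_power_le1 : q <= 1.
Proof.
pose proof (prob_constant_factors (1%nat :: nil)) as H.
simpl in H. rewrite Rmult_1_r in H. rewrite <- H by (constructor; [apply in_nil|constructor]).
apply (prob_le1 HP), (measurable_forall_list HF constant_factor (1%nat :: nil)).
intros m _. apply measurable_constant_factor.
Qed.

(* Induction on the factors required not to be constant, peeling one off by
   [P (C /\ ~ E) = P C - P (C /\ E)]. *)
Lemma prob_constant_factor_pattern (Nonconst Const : list nat) :
  NoDup (Nonconst ++ Const) ->
  P (fun w => (forall m, In m Const -> constant_factor m w) /\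
              (forall m, In m Nonconst -> ~ constant_factor m w))
  = q ^ length Const * (1 - q) ^ length Nonconst.
Proof.
revert Const. induction Nonconst as [|b Nonconst IH]; intros Const Hnd.
- simpl. rewrite Rmult_1_r, <- prob_constant_factors by exact Hnd.
  apply prob_ext. intro w; simpl; tauto.
- assert (Hnd1 : NoDup (Nonconst ++ Const)) by (apply NoDup_cons_iff in Hnd; tauto).
  assert (Hnd2 : NoDup (Nonconst ++ b :: Const))
    by (apply (Permutation_NoDup (Permutation_middle Nonconst Const b)), Hnd).
  set (C := fun w => (forall m, In m Const -> constant_factor m w) /\
                     (forall m, In m Nonconst -> ~ constant_factor m w)).
  assert (HC : F C).
  { apply (measurableI HF); apply (measurable_forall_list HF); intros m _;
      [|apply (measurableC HF)]; apply measurable_constant_factor. }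
  rewrite (prob_ext _ (fun w => C w /\ ~ constant_factor b w))
    by (intro w; unfold C; simpl; firstorder congruence).
  rewrite (prob_setD HP) by (exact HC || apply measurable_constant_factor).
  rewrite (prob_ext (fun w => C w /\ constant_factor b w)
     (fun w => (forall m, In m (b :: Const) -> constant_factor m w) /\
               (forall m, In m Nonconst -> ~ constant_factor m w)))
    by (intro w; unfold C; simpl; firstorder congruence).
  unfold C. rewrite IH, IH by assumption. simpl. ring.
Qed.

Lemma prob_no_constant_factor (n : nat) :
  P (fun w => forall m, In m (seq 1 n) -> ~ constant_factor m w) = (1 - q) ^ n.
Proof.
transitivity (q ^ length (@nil nat) * (1 - q) ^ length (seq 1 n)).
- rewrite <- prob_constant_factor_pattern by (rewrite app_nil_r; apply seq_NoDup).
  apply prob_ext. intro w; simpl; tauto.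
- rewrite length_seq. simpl. ring.
Qed.

Lemma measurable_real_spectrum (n : nat) :
  F (fun w => all_eigenvalues_real k (mat_prod k (fun m i j => X m i j w) n)).
Proof.
apply (RealSpectrum.measurable_all_eigenvalues_real HF).
induction n as [|n IH]; intros i j Hi Hj; simpl.
- apply measurable_fun_cst, HF.
- apply (measurable_fun_sumR HF). intros l Hl.
  apply (measurable_funM HF); [apply IH; auto|].
  intro c. apply (Hmeas (S n) l j Hl Hj (fun x => x <= c)). intros G _ HG. apply HG.
Qed.

Lemma prob_real_spectrum_ge (n : nat) :
  1 - (1 - q) ^ n <=
  P (fun w => all_eigenvalues_real k (mat_prod k (fun m i j => X m i j w) n)).
Proof.
set (NoConst := fun w => forall m, In m (seq 1 n) -> ~ constant_factor m w).
assert (HNoConst : F NoConst).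
{ apply (measurable_forall_list HF). intros m _.
  apply (measurableC HF), measurable_constant_factor. }
rewrite <- prob_no_constant_factor. fold NoConst. rewrite <- (prob_setC HP HNoConst).
apply (le_prob HP); [apply (measurableC HF), HNoConst|apply measurable_real_spectrum|].
intros w Hw.
assert (Hex : exists m, In m (seq 1 n) /\ constant_factor m w).
{ apply NNPP. intro Hn. apply Hw. intros m Hm HEm. apply Hn. exists m. auto. }
destruct Hex as [m [Hm HEm]]. apply in_seq in Hm.
apply RealSpectrum.rank_le1_all_eigenvalues_real.
apply (mat_prod_rank_le1 k _ m); [lia|].
exists (fun _ => a), (fun _ => 1). intros i j Hi Hj. rewrite Rmult_1_r. apply HEm; auto.
Qed.

End ConstantFactors.

Theorem mainTheorem18
  (mu : (R -> Prop) -> R)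
  (Hmu : probability_measure Borel mu)
  (Hatom : exists x : R, mu (fun y => y = x) > 0)
  (k : nat) (Hk : (1 <= k)%nat)
  (Omega : Type) (F : (Omega -> Prop) -> Prop) (P : (Omega -> Prop) -> R)
  (HP : probability_measure F P)
  (X : nat -> nat -> nat -> Omega -> R)
  (Hmeas : forall n i j, (i < k)%nat -> (j < k)%nat ->
     forall B, Borel B -> F (fun w => B (X n i j w)))
  (Hlaw : forall n i j, (i < k)%nat -> (j < k)%nat ->
     forall B, Borel B -> P (fun w => B (X n i j w)) = mu B)
  (Hindep : forall (l : list (nat * nat * nat)) (B : nat * nat * nat -> R -> Prop),
     NoDup l ->
     (forall t, In t l -> (snd (fst t) < k)%nat /\ (snd t < k)%nat /\ Borel (B t)) ->
     P (fun w => forall t, In t l -> B t (X (fst (fst t)) (snd (fst t)) (snd t) w))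
     = fold_right Rmult 1
         (map (fun t => P (fun w => B t (X (fst (fst t)) (snd (fst t)) (snd t) w))) l)) :
  Un_cv (fun n => P (fun w =>
           all_eigenvalues_real k (mat_prod k (fun (m i j : nat) => X m i j w) n))) 1.
Proof.
destruct Hatom as [a Ha].
assert (Hq : 0 < mu (fun y => y = a) ^ (k * k)) by (apply pow_lt; exact Ha).
assert (Hq1 := atom_power_le1 HP Hmeas Hlaw Hindep a).
apply (Un_cv_1_geometric _ (1 - mu (fun y => y = a) ^ (k * k))); [lra|].
intro n. split.
- apply (prob_real_spectrum_ge HP Hmeas Hlaw Hindep a n).
- apply (prob_le1 HP), (measurable_real_spectrum HP Hmeas).
Qed.
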